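(* Let $N\ge1$, let $\mathsf L=\mathrm{diag}(L_1,\dots,L_N)$ with nonzero complex $L_n$, let $|1\rangle$ be the $N$-column with all entries $1$, and let $\mathsf A$ be an $N\times N$ matrix satisfying $\mathsf L\mathsf A-\mathsf A\mathsf L^{-1}=|1\rangle\langle a|$ for some $N$-row $\langle a|$. For a complex number $\xi$ with $\xi\notin\{L_n,L_n^{-1}\}$ for all $n$, set $\mathsf H_\xi=(\xi-\mathsf L)(\xi-\mathsf L^{-1})^{-1}$ (so $\mathsf H_0=\mathsf L^2$). For functions $f(\mathsf A,F)$ of such a matrix $\mathsf A$ and a nonzero scalar $F$, define the shift $\mathbb T_\xi f(\mathsf A,F)=f(\mathsf A\mathsf H_\xi,-\xi F)$ (note $\mathsf A\mathsf H_\xi$ again satisfies the same type of relation, with row $\langle a|\mathsf H_\xi$). Define $$\tau(\mathsf A,F)=\det(\mathsf 1+\mathsf A),\quad \sigma(\mathsf A,F)=-F^{-1}\det(\mathsf 1+\mathsf A\mathsf H_0^{-1}),\quad \rho(\mathsf A,F)=F\det(\mathsf 1+\mathsf A\mathsf H_0),$$ i.e. $\tau=\Omega$, $\sigma=-F^{-1}\mathbb T_0^{-1}\Omega$, $\rho=F\,\mathbb T_0\Omega$ with $\Omega=\det(\mathsf 1+\mathsf A)$. Then for all nonzero $\xi,\eta\notin\{L_n,L_n^{-1}:n=1,\dots,N\}$, $$(\xi-\eta)\,\tau\,\mathbb T_\xi\mathbb T_\eta\sigma=\mathbb T_\xi\sigma\,\mathbb T_\eta\tau-\mathbb T_\xi\tau\,\mathbb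 T_\eta\sigma,$$ $$(\xi-\eta)\,\rho\,\mathbb T_\xi\mathbb T_\eta\tau=\mathbb T_\xi\tau\,\mathbb T_\eta\rho-\mathbb T_\xi\rho\,\mathbb T_\eta\tau,$$ $$\left(1-\frac{1}{\xi\eta}\right)\mathbb T_\xi\tau\,\mathbb T_\eta\tau=\tau\,\mathbb T_\xi\mathbb T_\eta\tau+\rho\,\mathbb T_\xi\mathbb T_\eta\sigma,$$ all functions being evaluated at the same $(\mathsf A,F)$.
   Context: Here $\mathsf 1$ is the $N\times N$ identity matrix; all matrices $\mathsf H_\xi$ are diagonal and commute. In particular $\mathbb T_\xi F=-\xi F$ for the scalar $F$. *)

(* Complex numbers are modelled as R[i] = complex R for a
   real closed field R (R = the reals gives C); the statement is proved for
   every such R. *)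
From HB Require Import structures.
From mathcomp Require Import all_boot all_order all_algebra.
From mathcomp Require Import complex.
Set Implicit Arguments. Unset Strict Implicit. Unset Printing Implicit Defensive.
Import Order.TTheory GRing.Theory Num.Theory.
Local Open Scope ring_scope.

Section Defs.
Variables (R : rcfType) (N : nat).
Local Notation C := (R[i])%C.

Definition Lmat (Ls : 'I_N -> C) : 'M[C]_N := diag_mx (\row_n Ls n).

Definition ones : 'cV[C]_N := const_mx 1.

Definition Hmat (Ls : 'I_N -> C) (xi : C) : 'M[C]_N :=
  (xi%:M - Lmat Ls) *m invmx (xi%:M - Lmat (fun n => (Ls n)^-1)).

Definition Tsh (Ls : 'I_N -> C) (xi : C) (f : 'M[C]_N -> C -> C) :
  'M[C]_N -> C -> C :=
  fun A F => f (A *m Hmat Ls xi) (- xi * F).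

Definition tau (Ls : 'I_N -> C) : 'M[C]_N -> C -> C :=
  fun A F => \det (1%:M + A).
Definition sigma (Ls : 'I_N -> C) : 'M[C]_N -> C -> C :=
  fun A F => - F^-1 * \det (1%:M + A *m invmx (Hmat Ls 0)).
Definition rho (Ls : 'I_N -> C) : 'M[C]_N -> C -> C :=
  fun A F => F * \det (1%:M + A *m Hmat Ls 0).
End Defs.

From HB Require Import structures.
From mathcomp Require Import all_boot all_order all_algebra.
From mathcomp Require Import complex ring.
Import Order.TTheory GRing.Theory Num.Theory.
Local Open Scope ring_scope.

Set Implicit Arguments. Unset Strict Implicit. Unset Printing Implicit Defensive.

(* Write Omega(d) = det(1 + A diag d); then tau, sigma, rho and all their shifts are
   values of Omega at products of the diagonals h_z = (z - l)/(z - 1/l) of H_z, and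
   h_0 = l^2.  Because L A - A L^-1 = |1><a|, a diagonal conjugation turns A diag(h)
   into a rank-two perturbation A + |1><u| + |l><v| of A for each of the weights
   h = l^2, h_x h_y, h_x l^2, h_y, h_x, h_y l^2.  When 1 + A is invertible the matrix
   determinant lemma writes every such Omega(h) as det(1 + A) times a 2x2 determinant
   in the six numbers r (1 + A)^-1 c, with r in {a l, a/(x - 1/l), a/(y - 1/l)} and
   c in {|1>, |l>}, and the identity
     (x - y) Omega(l^2) Omega(h_x h_y) = x Omega(h_x l^2) Omega(h_y) - y Omega(h_x) Omega(h_y l^2)
   becomes a rational identity in these numbers.  It holds for every A since, after
   replacing A by t A, both sides are polynomials in t that agree wherever
   det(1 + t A) <> 0.  The three bilinear equations are this identity for A diag(1/h_0),
   for A, and for A diag(h_x/h_0) with x replaced by 1/x, as h_(1/x) = l^2/h_x. *)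

Section MatrixAlgebra.
Variable K : fieldType.

Lemma mul_subr1_neq0 (z u : K) : u != 0 -> z != u^-1 -> z * u - 1 != 0.
Proof. by move=> u_neq0 z_neq_Vu; rewrite -(mulVf u_neq0) -mulrBl mulf_neq0 ?subr_eq0. Qed.

Lemma det_diag_similar n (p : 'I_n -> K) (X Y : 'M[K]_n) :
  (forall i, p i != 0) -> (forall i j, p i * X i j = Y i j * p j) ->
  \det X = \det Y.
Proof.
move=> p_neq0 pXY.
have PX : diag_mx (\row_i p i) *m X = Y *m diag_mx (\row_i p i).
  by apply/matrixP => i j; rewrite mul_diag_mx mul_mx_diag !mxE pXY.
have := congr1 determinant PX; rewrite !det_mulmx det_diag mulrC.
by apply: mulIf; apply/prodf_neq0 => i _; rewrite mxE.
Qed.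

Lemma det1D_mulmxC n k (U : 'M[K]_(n, k)) (W : 'M[K]_(k, n)) :
  \det (1%:M + U *m W) = \det (1%:M + W *m U).
Proof.
have E1 : block_mx 1%:M (- U) W 1%:M
    = block_mx 1%:M 0 W 1%:M *m block_mx 1%:M (- U) 0 (1%:M + W *m U).
  by rewrite mulmx_block !mul1mx !mul0mx !addr0 ?add0r mulmx1 mulmxN addrC addrK.
have E2 : block_mx 1%:M (- U) W 1%:M
    = block_mx (1%:M + U *m W) (- U) 0 1%:M *m block_mx 1%:M 0 W 1%:M.
  by rewrite mulmx_block !mul1mx !mul0mx !mulmx1 !mulmx0 !add0r mulNmx addrK.
have := congr1 determinant E1.
by rewrite E2 !det_mulmx !det_lblock !det_ublock !det1 !mul1r !mulr1.
Qed.

Lemma det_DmulmxE n k (M : 'M[K]_n) (U : 'M[K]_(n, k)) (W : 'M[K]_(k, n)) :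
  M \in unitmx -> \det (M + U *m W) = \det M * \det (1%:M + W *m invmx M *m U).
Proof.
move=> M_unit; have -> : M + U *m W = M *m (1%:M + invmx M *m U *m W).
  by rewrite mulmxDr mulmx1 !mulmxA mulmxV // mul1mx.
by rewrite det_mulmx [in LHS]det1D_mulmxC mulmxA.
Qed.

Lemma det_mx22 (Z : 'M[K]_2) : \det Z = Z 0 0 * Z 1 1 - Z 0 1 * Z 1 0.
Proof.
rewrite (expand_det_row _ 0) !big_ord_recl big_ord0 addr0 /cofactor !det_mx11 !mxE.
have -> : lift 0 (ord0 : 'I_1) = 1 by apply/val_inj.
have -> : lift 1 (0 : 'I_1) = 0 :> 'I_2 by apply/val_inj.
by rewrite /= expr0 expr1 mulN1r !mul1r mulrN.
Qed.

Lemma det_block11 (a b c d : 'M[K]_1) :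
  \det (block_mx a b c d : 'M_(1 + 1)) = a 0 0 * d 0 0 - b 0 0 * c 0 0.
Proof.
have l0 : (0 : 'I_2) = lshift 1 (0 : 'I_1) by apply/val_inj.
have r0 : (1 : 'I_2) = rshift 1 (0 : 'I_1) by apply/val_inj.
rewrite det_mx22 l0 r0 (block_mxEul a b c d) (block_mxEur a b c d).
by rewrite (block_mxEdl a b c d) (block_mxEdr a b c d).
Qed.

Lemma scalar_mxB_diag n (z : K) (d : 'I_n -> K) :
  z%:M - diag_mx (\row_i d i) = diag_mx (\row_i (z - d i)).
Proof.
apply/matrixP => i j; rewrite !mxE.
by case: eqVneq => [->|_]; rewrite ?mulr1n ?mulr0n ?subrr.
Qed.

Lemma mulmx_diag_diag m n (B : 'M[K]_(m, n)) (u v : 'I_n -> K) :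
  B *m diag_mx (\row_i u i) *m diag_mx (\row_i v i) = B *m diag_mx (\row_i (u i * v i)).
Proof.
rewrite -mulmxA mulmx_diag; congr (_ *m diag_mx _).
by apply/rowP => j; rewrite !mxE.
Qed.

Lemma invmx_diag n (d : 'I_n -> K) : (forall i, d i != 0) ->
  invmx (diag_mx (\row_i d i)) = diag_mx (\row_i (d i)^-1).
Proof.
move=> d_neq0; have dVd : diag_mx (\row_i (d i)^-1) *m diag_mx (\row_i d i) = 1%:M.
  apply/matrixP => i j; rewrite mul_diag_mx !mxE.
  by case: eqVneq => [->|_]; rewrite ?mulr1n ?mulr0n ?mulr0 ?mulVf.
by rewrite -[LHS]mul1mx -dVd mulmxK //; case: (mulmx1_unit dVd).
Qed.

Definition mxinv_form n (M : 'M[K]_n) (r : 'rV_n) (c : 'cV_n) : K :=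
  (r *m invmx M *m c) 0 0.

Lemma mxinv_formDl n (M : 'M[K]_n) r1 r2 c :
  mxinv_form M (r1 + r2) c = mxinv_form M r1 c + mxinv_form M r2 c.
Proof. by rewrite /mxinv_form !mulmxDl mxE. Qed.

Lemma mxinv_formNl n (M : 'M[K]_n) r c : mxinv_form M (- r) c = - mxinv_form M r c.
Proof. by rewrite /mxinv_form !mulNmx mxE. Qed.

Lemma mxinv_formZl n (M : 'M[K]_n) k r c :
  mxinv_form M (k *: r) c = k * mxinv_form M r c.
Proof. by rewrite /mxinv_form -!scalemxAl mxE. Qed.

Lemma mxinv_form0l n (M : 'M[K]_n) c : mxinv_form M 0 c = 0.
Proof. by rewrite /mxinv_form !mul0mx mxE. Qed.

Lemma det_add_rank2 n (M : 'M[K]_n) (c1 c2 : 'cV_n) (u v : 'rV_n) :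
  M \in unitmx ->
  \det (M + c1 *m u + c2 *m v) = \det M *
    ((1 + mxinv_form M u c1) * (1 + mxinv_form M v c2)
     - mxinv_form M u c2 * mxinv_form M v c1).
Proof.
move=> M_unit; rewrite -addrA -mul_row_col det_DmulmxE // mul_col_mx mul_col_row.
rewrite [1%:M](scalar_mx_block 1 1) add_block_mx det_block11 /mxinv_form.
by rewrite !mxE /= !add0r.
Qed.

End MatrixAlgebra.

Lemma poly_eq0_off_roots (K : numDomainType) (p q : {poly K}) :
  q != 0 -> (forall t, q.[t] != 0 -> p.[t] = 0) -> p = 0.
Proof.
move=> q_neq0 pq0; suff /eqP : p * q = 0.
  by rewrite mulf_eq0 (negPf q_neq0) orbF => /eqP.
pose ts := [seq i%:R : K | i <- iota 0 (size (p * q))].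
apply: (@roots_geq_poly_eq0 _ _ ts); last by rewrite size_map size_iota.
  apply/allP => _ /mapP[i _ ->]; rewrite /root hornerM.
  by have [->|/pq0 ->] := eqVneq q.[i%:R] 0; rewrite ?mulr0 ?mul0r.
by rewrite map_inj_uniq ?iota_uniq // => i j /eqP; rewrite eqr_nat => /eqP.
Qed.

Lemma horner_det1DX (K : comNzRingType) n (B : 'M[K]_n) t :
  (\det (1%:M + 'X *: map_mx polyC B)).[t] = \det (1%:M + t *: B).
Proof.
rewrite -[_.[t]]/(horner_eval t _) -det_map_mx; congr (\det _).
apply/matrixP => i j; rewrite !mxE -[LHS]/(((i == j)%:R + 'X * (B i j)%:P).[t]).
by rewrite hornerD hornerM hornerX hornerC hornerMn hornerC.
Qed.

Section CauchyMatrix.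
Variables (K : fieldType) (N : nat) (l : 'I_N -> K).

Definition detAH (A : 'M[K]_N) (d : 'I_N -> K) : K :=
  \det (1%:M + A *m diag_mx (\row_n d n)).

Definition cauchy_mx (a : 'I_N -> K) (A : 'M[K]_N) :=
  forall m n, A m n * (l m - (l n)^-1) = a n.

Definition hcoef (z : K) (n : 'I_N) : K := (z - l n) / (z - (l n)^-1).

Lemma eq_detAH A d1 d2 : d1 =1 d2 -> detAH A d1 = detAH A d2.
Proof.
by move=> d12; congr (\det (_ + _ *m diag_mx _)); apply/rowP => n; rewrite !mxE.
Qed.

Lemma detAH1 A : detAH A (fun=> 1) = \det (1%:M + A).
Proof.
rewrite /detAH mul_mx_diag; congr (\det (_ + _)).
by apply/matrixP => i j; rewrite !mxE mulr1.
Qed.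

Lemma detAH_mulmx_diag A w d :
  detAH (A *m diag_mx (\row_n w n)) d = detAH A (fun n => w n * d n).
Proof. by rewrite /detAH mulmx_diag_diag. Qed.

Lemma cauchy_mxZ a A t : cauchy_mx a A -> cauchy_mx (fun n => t * a n) (t *: A).
Proof. by move=> cauchyA m n; rewrite mxE -mulrA cauchyA. Qed.

Lemma cauchy_mx_mulmx_diag a A w : cauchy_mx a A ->
  cauchy_mx (fun n => a n * w n) (A *m diag_mx (\row_n w n)).
Proof. by move=> cauchyA m n; rewrite mul_mx_diag !mxE mulrAC cauchyA. Qed.

Lemma detAH_rank2 (A : 'M[K]_N) (P : 'I_N -> K) (u v : 'rV_N) d :
  1%:M + A \in unitmx -> (forall m, P m != 0) ->
  (forall m n, P m * (A m n * d n) = (A m n + u 0 n + l m * v 0 n) * P n) ->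
  let f := mxinv_form (1%:M + A) in
  detAH A d = \det (1%:M + A) * ((1 + f u (const_mx 1)) * (1 + f v (\col_m l m))
                                 - f u (\col_m l m) * f v (const_mx 1)).
Proof.
move=> M_unit P_neq0 PAd f; rewrite -det_add_rank2 //.
apply: (det_diag_similar P_neq0) => i j.
rewrite mul_mx_diag !mxE !big_ord1 !mxE mulrDr mulrDl PAd mul1r.
by case: eqVneq => [->|_]; rewrite ?mulr1n ?mulr0n ?mulr0 ?mul0r; ring.
Qed.

Variables (a : 'I_N -> K) (A : 'M[K]_N) (x y : K).
Hypotheses (l_neq0 : forall n, l n != 0) (cauchyA : cauchy_mx a A).
Hypotheses (x_neq0 : x != 0) (y_neq0 : y != 0).
Hypotheses (x_neq_l : forall n, x != l n) (x_neq_Vl : forall n, x != (l n)^-1).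
Hypotheses (y_neq_l : forall n, y != l n) (y_neq_Vl : forall n, y != (l n)^-1).

Lemma cauchy_identity_unit : \det (1%:M + A) != 0 ->
  (x - y) * detAH A (fun n => l n ^+ 2) * detAH A (fun n => hcoef x n * hcoef y n)
  = x * detAH A (fun n => hcoef x n * l n ^+ 2) * detAH A (hcoef y)
    - y * detAH A (hcoef x) * detAH A (fun n => hcoef y n * l n ^+ 2).
Proof.
move=> detM_neq0; have [<-|x_neq_y] := eqVneq x y; first ring.
have M_unit : 1%:M + A \in unitmx by rewrite unitmxE unitfE.
have xl_neq1 n := mul_subr1_neq0 (l_neq0 n) (x_neq_Vl n).
have yl_neq1 n := mul_subr1_neq0 (l_neq0 n) (y_neq_Vl n).
pose p := \row_n (a n * l n); pose q z := \row_n (a n / (z - (l n)^-1)).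
(* Conjugating by diag(z - l) turns A diag(hcoef z) into A - |1><q z|, because
   (z - L) A - A (z - L^-1) = - |1><a|; products of such factors and of L A L = A + |1><p|
   give the six rank-two updates below. *)
rewrite (detAH_rank2 (P := l) (u := p) (v := 0) (d := fun n => l n ^+ 2)) //
  ?(detAH_rank2 (P := fun m => (x - l m) * (y - l m))
      (u := (x - y)^-1 *: (y *: q x - x *: q y)) (v := (x - y)^-1 *: (q y - q x))
      (d := fun n => hcoef x n * hcoef y n)) //
  ?(detAH_rank2 (P := fun m => (x - l m) * l m) (u := p) (v := - x^-1 *: (p + q x))
      (d := fun n => hcoef x n * l n ^+ 2)) //
  ?(detAH_rank2 (P := fun m => y - l m) (u := - q y) (v := 0) (d := hcoef y)) //
  ?(detAH_rank2 (P := fun m => x - l m) (u := - q x) (v := 0) (d := hcoef x)) //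
  ?(detAH_rank2 (P := fun m => (y - l m) * l m) (u := p) (v := - y^-1 *: (p + q y))
      (d := fun n => hcoef y n * l n ^+ 2)) //.
- rewrite !(mxinv_formDl, mxinv_formNl, mxinv_formZl, mxinv_form0l).
  by field; rewrite y_neq0 x_neq0 subr_eq0 x_neq_y.
all: try by move=> m; rewrite ?mulf_neq0 ?subr_eq0.
all: move=> m n; rewrite !mxE /hcoef -(cauchyA m n); field.
all: by rewrite l_neq0 ?xl_neq1 ?yl_neq1 ?x_neq0 ?y_neq0 ?subr_eq0 ?x_neq_y.
Qed.

End CauchyMatrix.

Lemma detAH_identity_lift (K : numFieldType) N (A : 'M[K]_N) (x y : K)
    (d1 d2 d3 d4 d5 d6 : 'I_N -> K) :
  (forall t, \det (1%:M + t *: A) != 0 ->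
    (x - y) * detAH (t *: A) d1 * detAH (t *: A) d2
    = x * detAH (t *: A) d3 * detAH (t *: A) d4
      - y * detAH (t *: A) d5 * detAH (t *: A) d6) ->
  (x - y) * detAH A d1 * detAH A d2
  = x * detAH A d3 * detAH A d4 - y * detAH A d5 * detAH A d6.
Proof.
move=> identity_at.
pose D d : {poly K} := \det (1%:M + 'X *: map_mx polyC (A *m diag_mx (\row_n d n))).
have DE d t : (D d).[t] = detAH (t *: A) d by rewrite horner_det1DX scalemxAl.
pose E := (x - y)%:P * D d1 * D d2 - (x%:P * D d3 * D d4 - y%:P * D d5 * D d6).
have hornerE6 (p1 p2 p3 p4 p5 p6 : {poly K}) t :
    ((x - y)%:P * p1 * p2 - (x%:P * p3 * p4 - y%:P * p5 * p6)).[t]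
    = (x - y) * p1.[t] * p2.[t] - (x * p3.[t] * p4.[t] - y * p5.[t] * p6.[t]).
  by rewrite !hornerE.
(* Rewriting with [DE] directly is very slow: every candidate occurrence makes Rocq
   compare two distinct polynomial determinants by conversion. *)
have EE t : E.[t] = (x - y) * detAH (t *: A) d1 * detAH (t *: A) d2
    - (x * detAH (t *: A) d3 * detAH (t *: A) d4 - y * detAH (t *: A) d5 * detAH (t *: A) d6).
  by rewrite hornerE6; congr (_ * _ * _ - (_ * _ * _ - _ * _ * _)); apply: DE.
apply/eqP; rewrite -subr_eq0 -[A]scale1r -EE.
suff -> : E = 0 by rewrite horner0.
pose Q : {poly K} := \det (1%:M + 'X *: map_mx polyC A).
apply: (@poly_eq0_off_roots _ _ Q) => [|t Qt].
  apply/eqP => /(congr1 (horner^~ 0)).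
  by rewrite horner_det1DX scale0r addr0 det1 horner0 => /eqP; rewrite oner_eq0.
by rewrite EE identity_at ?subrr // -horner_det1DX.
Qed.

Section Bilinear.
Variables (K : numFieldType) (N : nat) (l a : 'I_N -> K) (A : 'M[K]_N) (x y F : K).
Hypotheses (l_neq0 : forall n, l n != 0) (cauchyA : cauchy_mx l a A).
Hypotheses (x_neq0 : x != 0) (y_neq0 : y != 0) (F_neq0 : F != 0).
Hypotheses (x_neq_l : forall n, x != l n) (x_neq_Vl : forall n, x != (l n)^-1).
Hypotheses (y_neq_l : forall n, y != l n) (y_neq_Vl : forall n, y != (l n)^-1).

Lemma cauchy_identity (z : K) (w d1 d2 d3 d4 d5 d6 : 'I_N -> K) :
  z != 0 -> (forall n, z != l n) -> (forall n, z != (l n)^-1) ->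
  (forall n, d1 n = w n * l n ^+ 2) ->
  (forall n, d2 n = w n * (hcoef l z n * hcoef l y n)) ->
  (forall n, d3 n = w n * (hcoef l z n * l n ^+ 2)) ->
  (forall n, d4 n = w n * hcoef l y n) ->
  (forall n, d5 n = w n * hcoef l z n) ->
  (forall n, d6 n = w n * (hcoef l y n * l n ^+ 2)) ->
  (z - y) * detAH A d1 * detAH A d2
  = z * detAH A d3 * detAH A d4 - y * detAH A d5 * detAH A d6.
Proof.
move=> z_neq0 z_neq_l z_neq_Vl e1 e2 e3 e4 e5 e6.
have Aw d d' : (forall n, d n = w n * d' n) ->
    detAH A d = detAH (A *m diag_mx (\row_n w n)) d'.
  by move=> dd'; rewrite detAH_mulmx_diag; apply: eq_detAH.
rewrite (Aw _ _ e1) (Aw _ _ e2) (Aw _ _ e3) (Aw _ _ e4) (Aw _ _ e5) (Aw _ _ e6).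
apply: detAH_identity_lift => t det_neq0.
exact: (cauchy_identity_unit l_neq0 (cauchy_mxZ t (cauchy_mx_mulmx_diag w cauchyA))
  z_neq0 y_neq0 z_neq_l z_neq_Vl y_neq_l y_neq_Vl det_neq0).
Qed.

Let xl_neq1 n := mul_subr1_neq0 (l_neq0 n) (x_neq_Vl n).
Let yl_neq1 n := mul_subr1_neq0 (l_neq0 n) (y_neq_Vl n).
Let lx_neq0 n : l n - x != 0. Proof. by rewrite subr_eq0 eq_sym. Qed.

Local Notation D := (detAH A).
Local Notation h := (hcoef l).

Lemma bilinear_tau_sigma :
  (x - y) * \det (1%:M + A) * (- (- y * (- x * F))^-1 * D (fun n => h x n * (h y n / h 0 n)))
  = - (- x * F)^-1 * D (fun n => h x n / h 0 n) * D (h y)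
    - D (h x) * (- (- y * F)^-1 * D (fun n => h y n / h 0 n)).
Proof.
have : (x - y) * D (fun=> 1) * D (fun n => h x n * (h y n / h 0 n))
    = x * D (h x) * D (fun n => h y n / h 0 n) - y * D (fun n => h x n / h 0 n) * D (h y).
  apply: (cauchy_identity (w := fun n => (h 0 n)^-1)) => // n;
  by rewrite /hcoef; field; rewrite ?l_neq0 ?xl_neq1 ?yl_neq1.
rewrite -detAH1 => /eqP; rewrite eq_sym subr_eq => /eqP tau_sigma.
by field: tau_sigma; rewrite x_neq0 y_neq0 F_neq0.
Qed.

Lemma bilinear_rho_tau :
  (x - y) * (F * D (h 0)) * D (fun n => h x n * h y n)
  = D (h x) * (- y * F * D (fun n => h y n * h 0 n))
    - - x * F * D (fun n => h x n * h 0 n) * D (h y).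
Proof.
have : (x - y) * D (h 0) * D (fun n => h x n * h y n)
    = x * D (fun n => h x n * h 0 n) * D (h y) - y * D (h x) * D (fun n => h y n * h 0 n).
  apply: (cauchy_identity (w := fun=> 1)) => // n;
  by rewrite /hcoef; field; rewrite ?l_neq0 ?xl_neq1 ?yl_neq1.
move=> /eqP; rewrite eq_sym subr_eq => /eqP rho_tau.
by field: rho_tau.
Qed.

Lemma bilinear_tau_rho :
  (1 - (x * y)^-1) * D (h x) * D (h y)
  = \det (1%:M + A) * D (fun n => h x n * h y n)
    + F * D (h 0) * (- (- y * (- x * F))^-1 * D (fun n => h x n * (h y n / h 0 n))).
Proof.
have Vx_neq0 : x^-1 != 0 by rewrite invr_eq0.
have Vx_neq_l n : x^-1 != l n by apply: contra_neq (x_neq_Vl n) => <-; rewrite invrK.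
have Vx_neq_Vl n : x^-1 != (l n)^-1 by apply: contra_neq (x_neq_l n) => /invr_inj.
have : (x^-1 - y) * D (h x) * D (h y)
    = x^-1 * D (h 0) * D (fun n => h x n * (h y n / h 0 n))
      - y * D (fun=> 1) * D (fun n => h x n * h y n).
  apply: (cauchy_identity (w := fun n => h x n / h 0 n) Vx_neq0 Vx_neq_l Vx_neq_Vl);
  by move=> n; rewrite /hcoef; field; rewrite ?l_neq0 ?x_neq0 ?xl_neq1 ?yl_neq1 ?mulN1r ?lx_neq0.
move=> /eqP; rewrite eq_sym subr_eq => /eqP tau_rho_Vx.
have tau_rho : D (h 0) * D (fun n => h x n * (h y n / h 0 n))
    = (1 - x * y) * D (h x) * D (h y) + x * y * D (fun=> 1) * D (fun n => h x n * h y n).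
  by apply: (mulfI Vx_neq0); rewrite mulrA tau_rho_Vx; field.
by rewrite -detAH1; field: tau_rho; rewrite x_neq0 y_neq0 F_neq0.
Qed.

Variable H : K -> 'M[K]_N.
Hypotheses (Hx : H x = diag_mx (\row_n hcoef l x n)) (Hy : H y = diag_mx (\row_n hcoef l y n)).
Hypothesis H0 : H 0 = diag_mx (\row_n hcoef l 0 n).

Lemma shifted_bilinear_identities :
  [/\ (x - y) * \det (1%:M + A)
        * (- (- y * (- x * F))^-1 * \det (1%:M + A *m H x *m H y *m invmx (H 0)))
      = - (- x * F)^-1 * \det (1%:M + A *m H x *m invmx (H 0)) * \det (1%:M + A *m H y)
        - \det (1%:M + A *m H x) * (- (- y * F)^-1 * \det (1%:M + A *m H y *m invmx (H 0))),
      (x - y) * (F * \det (1%:M + A *m H 0)) * \det (1%:M + A *m H x *m H y)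
      = \det (1%:M + A *m H x) * (- y * F * \det (1%:M + A *m H y *m H 0))
        - - x * F * \det (1%:M + A *m H x *m H 0) * \det (1%:M + A *m H y)
    & (1 - (x * y)^-1) * \det (1%:M + A *m H x) * \det (1%:M + A *m H y)
      = \det (1%:M + A) * \det (1%:M + A *m H x *m H y)
        + F * \det (1%:M + A *m H 0)
          * (- (- y * (- x * F))^-1 * \det (1%:M + A *m H x *m H y *m invmx (H 0)))].
Proof.
have h0_neq0 n : hcoef l 0 n != 0.
  by rewrite /hcoef !sub0r invrN mulrNN mulf_neq0 ?invr_eq0.
rewrite Hx Hy H0 (invmx_diag h0_neq0) !mulmx_diag_diag.
split; [exact: bilinear_tau_sigma | exact: bilinear_rho_tau | exact: bilinear_tau_rho].
Qed.

End Bilinear.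

Lemma Hmat_diag (R : rcfType) N (Ls : 'I_N -> R[i]) z : (forall n, z != (Ls n)^-1) ->
  Hmat Ls z = diag_mx (\row_n hcoef Ls z n).
Proof.
move=> z_neq_Vl; rewrite /Hmat /Lmat !scalar_mxB_diag invmx_diag; last first.
  by move=> n; rewrite subr_eq0.
by rewrite mulmx_diag; congr diag_mx; apply/rowP => n; rewrite !mxE.
Qed.

Lemma cauchy_mx_Lmat (R : rcfType) N (Ls : 'I_N -> R[i]) (A : 'M_N) (a : 'rV_N) :
  (forall n, Ls n != 0) -> Lmat Ls *m A - A *m invmx (Lmat Ls) = ones R N *m a ->
  cauchy_mx Ls (fun n => a 0 n) A.
Proof.
move=> Ls_neq0 LA m n; have := congr1 (fun M : 'M_N => M m n) LA.
rewrite /Lmat (invmx_diag Ls_neq0) mul_diag_mx mul_mx_diag /ones.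
rewrite !mxE big_ord1 !mxE mul1r => <-.
by rewrite mulrBr mulrC.
Qed.

Theorem proposition4p1p1 (R : rcfType) (N : nat) (HN : (0 < N)%N)
  (Ls : 'I_N -> R[i]%C) (HL : forall n, Ls n != 0)
  (A : 'M[R[i]%C]_N) (a : 'rV[R[i]%C]_N)
  (HA : Lmat Ls *m A - A *m invmx (Lmat Ls) = @ones R N *m a)
  (F : R[i]%C) (HF : F != 0)
  (xi eta : R[i]%C) (Hxi0 : xi != 0) (Heta0 : eta != 0)
  (Hxi : forall n, xi != Ls n /\ xi != (Ls n)^-1)
  (Heta : forall n, eta != Ls n /\ eta != (Ls n)^-1) :
  let T := Tsh Ls in
  let ta := tau Ls in let si := sigma Ls in let rh := rho Ls in
  [/\ (xi - eta) * ta A F * T xi (T eta si) A F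
        = T xi si A F * T eta ta A F - T xi ta A F * T eta si A F,
      (xi - eta) * rh A F * T xi (T eta ta) A F
        = T xi ta A F * T eta rh A F - T xi rh A F * T eta ta A F
    & (1 - (xi * eta)^-1) * T xi ta A F * T eta ta A F
        = ta A F * T xi (T eta ta) A F + rh A F * T xi (T eta si) A F].
Proof.
have [xi_neq_l xi_neq_Vl] := all_and2 Hxi; have [eta_neq_l eta_neq_Vl] := all_and2 Heta.
have zero_neq_Vl n : 0 != (Ls n)^-1 by rewrite eq_sym invr_eq0 HL.
move=> T ta si rh; rewrite /T /ta /si /rh /Tsh /tau /sigma /rho.
exact: (shifted_bilinear_identities HL (cauchy_mx_Lmat HL HA) Hxi0 Heta0 HF
  xi_neq_l xi_neq_Vl eta_neq_l eta_neq_Vl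
  (Hmat_diag xi_neq_Vl) (Hmat_diag eta_neq_Vl) (Hmat_diag zero_neq_Vl)).
Qed.
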